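(* Let $\Phi$ be a root system of type $E_8$. For every $k$ with $0\le k\le 8$, $k\neq4$, any two sets of $k$ pairwise strongly orthogonal roots of $\Phi$ are conjugate under $W(\Phi)$. The sets $\{\alpha_1,\alpha_2,\alpha_3,\alpha_4\}$ of four pairwise strongly orthogonal roots form exactly two $W(\Phi)$-conjugacy classes: those with $K_4(\alpha_1,\alpha_2,\alpha_3,\alpha_4)\subseteq W(\Phi)$, and those with $K_4(\alpha_1,\alpha_2,\alpha_3,\alpha_4)\not\subseteq W(\Phi)$.
   Context: $\Phi$ spans a real Euclidean space $V$ with inner product $(\cdot|\cdot)$; for $0\ne\eta\in V$, $s_\eta(\xi)=\xi-2\frac{(\xi|\eta)}{(\eta|\eta)}\eta$ is the orthogonal reflection in $\eta^\perp$, and $W(\Phi)$ is the Weyl group generated by $s_\alpha$, $\alpha\in\Phi$. Two distinct roots are strongly orthogonal if they are orthogonal and neither their sum nor their difference is a root. For four pairwise orthogonal vectors $v_1,\dots,v_4$ of equal length, $K_4(v_1,v_2,v_3,v_4)$ denotes the Klein four-group of isometries $\{\mathrm{id},\ s_{v_1-v_2}\circ s_{v_3-v_4},\ s_{v_1-v_3}\circ s_{v_2-v_4},\ s_{v_1-v_4}\circ s_{v_2-v_3}\}$. *)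

From mathcomp Require Import all_boot all_order all_algebra.
Set Implicit Arguments. Unset Strict Implicit. Unset Printing Implicit Defensive.
Import Order.TTheory GRing.Theory Num.Theory.
Local Open Scope ring_scope.

Section E8.
Variable R : realFieldType.

Definition vec := 'rV[R]_8.

Definition dotp (u v : vec) : R := \sum_(i < 8) u 0 i * v 0 i.

Definition refl (eta : vec) (xi : vec) : vec :=
  xi - ((2 * dotp xi eta) / dotp eta eta) *: eta.

Definition ev (i : 'I_8) : vec := delta_mx 0 i.

Definition isE8root (x : vec) : Prop :=
  (exists (i j : 'I_8) (a b : bool), i != j /\
      x = (-1) ^+ a *: ev i + (-1) ^+ b *: ev j)
  \/
  (exists f : {ffun 'I_8 -> bool}, ~~ odd #|[set k | f k]| /\
      x = \row_(k < 8) ((-1) ^+ (f k) / 2)).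

Definition reflword (s : seq vec) (x : vec) : vec := foldr refl x s.

Definition inWeyl (w : vec -> vec) : Prop :=
  exists s : seq vec, (forall a, a \in s -> isE8root a) /\
    (forall x, w x = reflword s x).

Definition strongly_orth (a b : vec) : Prop :=
  a != b /\ dotp a b = 0 /\ ~ isE8root (a + b) /\ ~ isE8root (a - b).

Definition SOset (k : nat) (S : seq vec) : Prop :=
  uniq S /\ size S = k /\ (forall a, a \in S -> isE8root a) /\
  (forall a b, a \in S -> b \in S -> a != b -> strongly_orth a b).

Definition Wconj (S T : seq vec) : Prop :=
  exists w, inWeyl w /\ perm_eq (map w S) T.

(* K_4(v1,v2,v3,v4) contained in W: each nonidentity element lies in W
   (the identity always does). *)
Definition K4_in_W (v1 v2 v3 v4 : vec) : Prop :=
  inWeyl (refl (v1 - v2) \o refl (v3 - v4)) /\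
  inWeyl (refl (v1 - v3) \o refl (v2 - v4)) /\
  inWeyl (refl (v1 - v4) \o refl (v2 - v3)).

Definition K4_in_W_seq (S : seq vec) : Prop :=
  K4_in_W (nth 0 S 0) (nth 0 S 1) (nth 0 S 2) (nth 0 S 3).

End E8.

From mathcomp Require Import all_boot all_order all_algebra.
From mathcomp Require Import ring lra zify.
Set Implicit Arguments. Unset Strict Implicit. Unset Printing Implicit Defensive.
Import Order.TTheory GRing.Theory Num.Theory.
Local Open Scope ring_scope.

(* Every set of pairwise orthogonal roots of E8 is W-conjugate to one of ten explicit
   representatives: one of each size, except two of size 4 ([quadK4in] and [quadK4out]).
   Adding the roots one at a time, it is enough to know, for each representative [c] and each
   root [n] orthogonal to [c], a product of reflections mapping [c ++ [n]] onto a representative;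
   this finite certificate is checked by computation in integer coordinates.  Orthogonal roots
   are automatically strongly orthogonal, since [a + b] and [a - b] have norm 4.
   For the quadruples, [K4 a b c d] is conjugated by [w] to [K4 (w a) (w b) (w c) (w d)], so
   whether it lies in W is a conjugacy invariant.  For [quadK4in] each nontrivial element
   [s_u s_v] of [K4] equals [s_((u+v)/2) s_((u-v)/2)], a product of two root reflections; for
   [quadK4out] one of them maps a root to a non-root, which no element of W does. *)

(** * Reflections *)

Section Reflections.
Variable R : realFieldType.
Implicit Types (a u v x y : vec R) (s : seq (vec R)).

Lemma dotpC u v : dotp u v = dotp v u.
Proof. by apply: eq_bigr => i _; rewrite mulrC. Qed.

Lemma dotpDl u v x : dotp (u + v) x = dotp u x + dotp v x.
Proof. by rewrite /dotp -big_split; apply: eq_bigr => i _; rewrite !mxE mulrDl. Qed.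

Lemma dotpZl (c : R) u x : dotp (c *: u) x = c * dotp u x.
Proof. by rewrite /dotp mulr_sumr; apply: eq_bigr => i _; rewrite !mxE mulrA. Qed.

Lemma dotpNl u x : dotp (- u) x = - dotp u x.
Proof. by rewrite -scaleN1r dotpZl mulN1r. Qed.

Lemma dotpBl u v x : dotp (u - v) x = dotp u x - dotp v x.
Proof. by rewrite dotpDl dotpNl. Qed.

Lemma dotpDr u v x : dotp x (u + v) = dotp x u + dotp x v.
Proof. by rewrite dotpC dotpDl !(dotpC x). Qed.

Lemma dotpZr (c : R) u x : dotp x (c *: u) = c * dotp x u.
Proof. by rewrite dotpC dotpZl dotpC. Qed.

Lemma dotpNr u x : dotp x (- u) = - dotp x u.
Proof. by rewrite dotpC dotpNl dotpC. Qed.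

Lemma dotpBr u v x : dotp x (u - v) = dotp x u - dotp x v.
Proof. by rewrite dotpC dotpBl !(dotpC x). Qed.

Lemma reflE a x : refl a x = x - (2 * dotp x a / dotp a a) *: a.
Proof. by []. Qed.

Lemma reflB a x y : refl a (x - y) = refl a x - refl a y.
Proof. by rewrite /refl dotpBl; apply/rowP => i; rewrite !mxE; ring. Qed.

Lemma reflZ a (c : R) x : refl a (c *: x) = c *: refl a x.
Proof. by rewrite /refl dotpZl; apply/rowP => i; rewrite !mxE; ring. Qed.

Lemma refl_iso a x y : dotp a a != 0 -> dotp (refl a x) (refl a y) = dotp x y.
Proof.
move=> ha; rewrite /refl !(dotpBl, dotpBr, dotpZl, dotpZr) ?(dotpC a x) ?(dotpC a y).
by field.
Qed.

Lemma refl_self a : dotp a a != 0 -> refl a a = - a.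
Proof.
move=> ha; rewrite /refl mulfK // -[X in X - _]scale1r -scalerBl.
by rewrite -scaleN1r; congr (_ *: _); ring.
Qed.

Lemma reflK a : dotp a a != 0 -> involutive (refl a).
Proof.
move=> ha x; rewrite [refl a x]reflE reflB reflZ refl_self // scalerN opprK.
by rewrite reflE subrK.
Qed.

Lemma refl_conj a v x : dotp a a != 0 ->
  refl a (refl v x) = refl (refl a v) (refl a x).
Proof. by move=> ha; rewrite [refl v x]reflE reflB reflZ [RHS]reflE !refl_iso. Qed.

Lemma reflN v x : refl (- v) x = refl v x.
Proof. by rewrite /refl dotpNl !dotpNr opprK mulrN mulNr scaleNr scalerN opprK. Qed.

Lemma refl_comm u v x : dotp u v = 0 -> refl u (refl v x) = refl v (refl u x).
Proof.
move=> huv; rewrite /refl !(dotpBl, dotpZl) (dotpC v u) huv mulr0 subr0.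
by apply/rowP => i; rewrite !mxE; ring.
Qed.

Lemma refl_pair u v x : dotp u v = 0 -> dotp u u = dotp v v -> dotp u u != 0 ->
  refl u (refl v x) = refl ((1/2) *: (u + v)) (refl ((1/2) *: (u - v)) x).
Proof.
move=> huv huu hu; rewrite /refl.
rewrite !(dotpBl, dotpDl, dotpNl, dotpZl, dotpBr, dotpDr, dotpZr) (dotpC v u) huv -huu.
apply/rowP => i; rewrite !mxE.
by field; rewrite hu -mulr2n mulrn_eq0 negb_or hu.
Qed.

Lemma reflword_cat s1 s2 x : reflword (s1 ++ s2) x = reflword s1 (reflword s2 x).
Proof. by rewrite /reflword foldr_cat. Qed.

Lemma reflwordB s x y : reflword s (x - y) = reflword s x - reflword s y.
Proof. by elim: s => //= a s ->; rewrite reflB. Qed.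

Lemma nondeg_behead a s :
  {in a :: s, forall b, dotp b b != 0} -> {in s, forall b, dotp b b != 0}.
Proof. by move=> nd b bs; rewrite nd // inE bs orbT. Qed.

Section NondegenerateWord.
Variable s : seq (vec R).
Hypothesis s_nondeg : {in s, forall a, dotp a a != 0}.

Lemma reflword_iso x y : dotp (reflword s x) (reflword s y) = dotp x y.
Proof.
elim: s s_nondeg => //= a t IH nd; have nd_t := nondeg_behead nd.
by rewrite refl_iso ?IH // nd ?mem_head.
Qed.

Lemma reflword_conj v x : reflword s (refl v x) = refl (reflword s v) (reflword s x).
Proof.
elim: s s_nondeg => //= a t IH nd; have nd_t := nondeg_behead nd.
by rewrite IH // refl_conj // nd ?mem_head.
Qed.

Lemma reflwordK : cancel (reflword s) (reflword (rev s)).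
Proof.
elim: s s_nondeg => //= a t IH nd x; have nd_t := nondeg_behead nd.
by rewrite rev_cons -cats1 reflword_cat /= reflK ?IH // nd ?mem_head.
Qed.

End NondegenerateWord.

Lemma reflword_revK s :
  {in s, forall a, dotp a a != 0} -> cancel (reflword (rev s)) (reflword s).
Proof.
move=> nd x; rewrite -{1}(revK s) reflwordK // => a.
by rewrite mem_rev => /nd.
Qed.

End Reflections.

(** * Integer coordinates *)

Definition ivec := seq int.

(* Integer vectors stand for their quarters, so that all roots have integer coordinates. *)
Definition emb (R : realFieldType) (z : ivec) : vec R := \row_(k < 8) ((z`_k)%:~R / 4).

Definition mkv (f : nat -> int) : ivec := [seq f k | k <- iota 0 8].
Definition idot (a b : ivec) : int := foldr (fun k acc => a`_k * b`_k + acc) 0 (iota 0 8).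
Definition iadd (a b : ivec) : ivec := mkv (fun k => a`_k + b`_k).
Definition isub (a b : ivec) : ivec := mkv (fun k => a`_k - b`_k).
Definition idouble (a : ivec) : ivec := mkv (fun k => 2 * a`_k).

(* In these coordinates [refl a x] is [irefl_num a x] divided by [idot a a]; [irefl] performs
   this division with [%/], which is exact when [irefl_exact a x] holds. *)
Definition irefl_num (a x : ivec) : ivec :=
  let d := idot a a in let c := 2 * idot x a in mkv (fun k => d * x`_k - c * a`_k).
Definition irefl (a x : ivec) : ivec :=
  let d := idot a a in [seq (y %/ d)%Z | y <- irefl_num a x].
Definition irefl_exact (a x : ivec) : bool :=
  let d := idot a a in (d != 0) && all (fun y => (d %| y)%Z) (irefl_num a x).

Section Embedding.
Variable R : realFieldType.
Local Notation emb := (@emb R).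
Implicit Types (a b x : ivec) (f : nat -> int).

Lemma size_mkv f : size (mkv f) = 8%N.
Proof. by rewrite size_map size_iota. Qed.

Lemma nth_mkv f k : (k < 8)%N -> (mkv f)`_k = f k.
Proof. by move=> lt_k8; rewrite (nth_map 0) ?size_iota // nth_iota. Qed.

Lemma emb_mkv f : emb (mkv f) = \row_k ((f k)%:~R / 4).
Proof. by apply/rowP => k; rewrite !mxE nth_mkv. Qed.

Lemma embD a b : emb (iadd a b) = emb a + emb b.
Proof. by rewrite emb_mkv; apply/rowP => k; rewrite !mxE intrD mulrDl. Qed.

Lemma embB a b : emb (isub a b) = emb a - emb b.
Proof. by rewrite emb_mkv; apply/rowP => k; rewrite !mxE intrB mulrBl. Qed.

Lemma emb_double a : emb (idouble a) = 2 *: emb a.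
Proof. by rewrite emb_mkv; apply/rowP => k; rewrite !mxE intrM mulrA. Qed.

Lemma dotp_emb a b : dotp (emb a) (emb b) = (idot a b)%:~R / 16.
Proof. by rewrite /dotp /idot !big_ord_recl big_ord0 !mxE /= !(intrD, intrM); field. Qed.

Lemma emb_inj a b : size a = 8%N -> size b = 8%N -> emb a = emb b -> a = b.
Proof.
move=> sa sb eab; apply: (eq_from_nth (x0 := 0)); rewrite ?sa ?sb // => k lt_k8.
have := congr1 (fun v : vec R => v 0 (Ordinal lt_k8) * 4) eab.
by rewrite !mxE !divfK ?pnatr_eq0 //; apply: intr_inj.
Qed.

Lemma size_irefl a x : size (irefl a x) = 8%N.
Proof. by rewrite size_map size_mkv. Qed.

Lemma mkv_nth x : size x = 8%N -> mkv (nth 0 x) = x.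
Proof.
move=> sx; apply: (eq_from_nth (x0 := 0)) => [|k]; rewrite size_mkv ?sx // => lt_k8.
by rewrite nth_mkv.
Qed.

Lemma nth_irefl a x k : (k < 8)%N -> (irefl a x)`_k = ((irefl_num a x)`_k %/ idot a a)%Z.
Proof. by move=> lt_k8; apply: (nth_map 0); rewrite size_mkv. Qed.

Lemma irefl_orth a x : size x = 8%N -> idot a a != 0 -> idot x a = 0 -> irefl a x = x.
Proof.
move=> sx d0 xa0; rewrite -[RHS]mkv_nth //.
apply: (eq_from_nth (x0 := 0)) => [|k]; rewrite ?size_irefl ?size_mkv // => lt_k8.
by rewrite nth_irefl // !nth_mkv // xa0 mulr0 mul0r subr0 mulKz.
Qed.

Lemma emb_irefl a x : irefl_exact a x -> refl (emb a) (emb x) = emb (irefl a x).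
Proof.
case/andP=> d_neq0 /allP dvd_num; apply/rowP => k.
have dR : (idot a a)%:~R != 0 :> R by rewrite intr_eq0.
have qE : ((irefl a x)`_k)%:~R * (idot a a)%:~R = ((irefl_num a x)`_k)%:~R :> R.
  by rewrite -intrM nth_irefl // divzK // dvd_num // mem_nth ?size_mkv.
rewrite /refl !mxE -(mulfK dR ((irefl a x)`_k)%:~R) qE nth_mkv // !dotp_emb.
by rewrite !(intrM, intrB) -[2%:~R]/(2 : R); field.
Qed.

End Embedding.

(** * The roots of E8 and the Weyl group *)

Definition ipm (i j : nat) (a b : bool) : ivec :=
  mkv (fun k => (if k == i then (-1) ^+ a * 4 else 0) + (if k == j then (-1) ^+ b * 4 else 0)).
Definition ihalf (bs : seq bool) : ivec := mkv (fun k => (-1) ^+ nth false bs k * 2).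

Fixpoint sign_lists (n : nat) : seq (seq bool) :=
  if n is n'.+1 then [seq b :: l | b <- [:: false; true], l <- sign_lists n'] else [:: [::]].

(* The 240 roots, scaled by 4: the 112 vectors [+-4 e_i +-4 e_j] with [i < j], then the 128
   vectors [+-2, ..., +-2] with an even number of minus signs, in lexicographic order.  The
   certificate below refers to roots by their index in this list. *)
Definition iroots : seq ivec :=
  [seq ipm ij.1 ij.2 ab.1 ab.2 | ij <- [seq (i, j) | i <- iota 0 8, j <- iota i.+1 (7 - i)],
                                ab <- [seq (a, b) | a <- [:: false; true], b <- [:: false; true]]]
  ++ [seq ihalf bs | bs <- [seq bs <- sign_lists 8 | ~~ odd (count id bs)]].

Lemma sign_listsP n bs : (bs \in sign_lists n) = (size bs == n).
Proof.
elim: n bs => [|n IH] bs; first by rewrite inE size_eq0.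
apply/allpairsP/idP => [[[b l] [_ l_n ->]] | ]; first by rewrite /= eqSS -IH.
case: bs => [//|b l] /=; rewrite eqSS -IH => l_n.
by exists (b, l); split=> //; case: b.
Qed.

Lemma ipmC i j a b : ipm i j a b = ipm j i b a.
Proof. by apply: eq_map => k; rewrite addrC. Qed.

Lemma ipm_root i j a b : (i < j < 8)%N -> ipm i j a b \in iroots.
Proof.
case/andP=> lt_ij lt_j8; have lt_i8 := ltn_trans lt_ij lt_j8.
rewrite mem_cat; apply/orP; left; apply/allpairsP; exists ((i, j), (a, b)); split=> //.
  apply/allpairsPdep; exists i, j; split=> //; rewrite mem_iota ?lt_i8 //.
  by rewrite lt_ij addSn subnKC.
by apply/allpairsP; exists (a, b); case: a; case: b.
Qed.

Section Roots.
Variable R : realFieldType.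
Local Notation emb := (@emb R).
Implicit Types (x : vec R) (z : ivec).

Lemma emb_ipm (i j : 'I_8) a b :
  emb (ipm i j a b) = (-1) ^+ a *: ev R i + (-1) ^+ b *: ev R j.
Proof.
apply/rowP => k; rewrite emb_mkv !mxE /= !val_eqE.
by case: (k == i); case: (k == j);
  rewrite ?(rmorphD, rmorphM, rmorphXn, rmorphN, rmorph_nat) /=; lra.
Qed.

Lemma emb_ihalf (f : {ffun 'I_8 -> bool}) :
  emb (ihalf [seq f (inord k) | k <- iota 0 8]) = \row_(k < 8) ((-1) ^+ (f k) / 2).
Proof.
apply/rowP => k; rewrite emb_mkv !mxE (nth_map 0) ?size_iota // nth_iota // inord_val.
by rewrite ?(rmorphM, rmorphXn, rmorphN, rmorph_nat) /=; lra.
Qed.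

Lemma card_sign_set (f : {ffun 'I_8 -> bool}) :
  #|[set k | f k]| = count id [seq f (inord k) | k <- iota 0 8].
Proof.
rewrite cardsE cardE /enum_mem size_filter -enumT -val_enum_ord -map_comp count_map.
by apply: eq_count => k /=; rewrite inord_val.
Qed.

Lemma isE8rootP x : isE8root x <-> exists2 z, z \in iroots & x = emb z.
Proof.
split.
- case=> [[i [j [a [b [neq_ij ->]]]]] | [f [even_f ->]]].
    rewrite -emb_ipm; case: (ltngtP i j) => [lt_ij | lt_ji | /val_inj eq_ij].
    + by exists (ipm i j a b); first by apply: ipm_root; apply/andP.
    + by exists (ipm j i b a); [apply: ipm_root; apply/andP | rewrite ipmC].
    + by rewrite eq_ij eqxx in neq_ij.
  exists (ihalf [seq f (inord k) | k <- iota 0 8]); last by rewrite emb_ihalf.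
  rewrite mem_cat; apply/orP; right; apply: map_f.
  by rewrite mem_filter -card_sign_set even_f sign_listsP size_map size_iota.
- case=> z; rewrite mem_cat => /orP[].
    case/allpairsP=> -[[i j] [a b]] [/allpairsPdep[i' [j' [i'_in j'_in [-> ->]]]] _ ->] ->.
    move: i'_in j'_in; rewrite !mem_iota => /andP[_ lt_i8] /andP[lt_ij lt_j].
    have lt_j8 : (j' < 8)%N by lia.
    left; exists (Ordinal lt_i8), (Ordinal lt_j8), a, b.
    by rewrite -emb_ipm -(inj_eq val_inj) /= neq_ltn lt_ij.
  case/mapP=> bs; rewrite mem_filter sign_listsP => /andP[even_bs /eqP size_bs] -> ->; right.
  pose f := [ffun k : 'I_8 => nth false bs k].
  have Ebs : [seq f (inord k) | k <- iota 0 8] = bs.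
    apply: (eq_from_nth (x0 := false)) => [|k]; first by rewrite size_map size_iota.
    rewrite size_map size_iota => lt_k8.
    by rewrite (nth_map 0) ?size_iota // nth_iota // ffunE inordK.
  by exists f; split; [rewrite card_sign_set Ebs | rewrite -Ebs emb_ihalf].
Qed.

End Roots.

Lemma iroots_size z : z \in iroots -> size z = 8%N.
Proof.
by rewrite mem_cat => /orP[/allpairsP[[ij ab] [_ _ ->]] | /mapP[bs _ ->]]; apply: size_mkv.
Qed.

Lemma iroots_norm : all (fun z => idot z z == 32) iroots.
Proof. by vm_compute. Qed.

(* Orthogonal pairs, for which the reflection fixes [x] (see [irefl_orth]), are skipped; the
   [if] keeps the evaluation from computing the reflection anyway. *)
Lemma iroots_refl_closed : all (fun a => all (fun x =>
  if idot x a == 0 then true else irefl_exact a x && (irefl a x \in iroots)) iroots) iroots.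
Proof. by vm_compute. Qed.

Section RootSystem.
Variable R : realFieldType.
Local Notation emb := (@emb R).
Implicit Types (a b x : vec R) (s S T U : seq (vec R)).

Lemma root_norm x : isE8root x -> dotp x x = 2.
Proof.
case/isE8rootP=> z z_root ->; rewrite dotp_emb.
by rewrite (eqP (allP iroots_norm z z_root)); rewrite -[32%:~R]/(32 : R); field.
Qed.

Lemma root_nondeg x : isE8root x -> dotp x x != 0.
Proof. by move/root_norm ->; rewrite pnatr_eq0. Qed.

Lemma emb_irefl_root (z y : ivec) : z \in iroots -> y \in iroots ->
  refl (emb z) (emb y) = emb (irefl z y) /\ irefl z y \in iroots.
Proof.
move=> z_root y_root; have zz : idot z z != 0 by rewrite (eqP (allP iroots_norm z z_root)).
have := allP (allP iroots_refl_closed z z_root) y y_root.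
case: ifP => [/eqP yz0 _ | _ /andP[zy_exact ->]].
  by rewrite irefl_orth ?iroots_size // /refl dotp_emb yz0 !mul0r mulr0 mul0r scale0r subr0.
by rewrite emb_irefl.
Qed.

Lemma refl_root a x : isE8root a -> isE8root x -> isE8root (refl a x).
Proof.
case/isE8rootP=> za za_root ->; case/isE8rootP=> zx zx_root ->.
by have [-> ?] := emb_irefl_root za_root zx_root; apply/isE8rootP; exists (irefl za zx).
Qed.

Lemma orth_roots_strongly_orth a b : isE8root a -> isE8root b -> a != b -> dotp a b = 0 ->
  strongly_orth a b.
Proof.
move=> ra rb neq_ab ab0; split=> //; split=> //; split=> /root_norm.
  by rewrite !(dotpDl, dotpDr) (dotpC b a) ab0 !root_norm //; lra.
by rewrite !(dotpBl, dotpBr) (dotpC b a) ab0 !root_norm //; lra.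
Qed.

Definition rootword s : Prop := forall a, a \in s -> isE8root a.

Lemma rootword_nondeg s : rootword s -> {in s, forall a, dotp a a != 0}.
Proof. by move=> rs a /rs /root_nondeg. Qed.

Lemma rootword_cat s1 s2 : rootword s1 -> rootword s2 -> rootword (s1 ++ s2).
Proof. by move=> r1 r2 a; rewrite mem_cat => /orP[/r1|/r2]. Qed.

Lemma rootword_rev s : rootword s -> rootword (rev s).
Proof. by move=> rs a; rewrite mem_rev => /rs. Qed.

Lemma reflword_root s x : rootword s -> isE8root x -> isE8root (reflword s x).
Proof.
elim: s => //= a s IH rs rx; apply: refl_root; first exact/rs/mem_head.
by apply: IH => // b bs; apply/rs; rewrite inE bs orbT.
Qed.

Lemma reflword_inj s : rootword s -> injective (reflword s).
Proof. by move/rootword_nondeg/reflwordK/can_inj. Qed.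

Lemma inWeyl_ext (g g' : vec R -> vec R) : g =1 g' -> inWeyl g -> inWeyl g'.
Proof. by move=> eq_g [s [rs gE]]; exists s; split=> // x; rewrite -eq_g. Qed.

Lemma Wconj_reflword s S T : rootword s -> perm_eq (map (reflword s) S) T -> Wconj S T.
Proof. by move=> rs ST; exists (reflword s); split=> //; exists s. Qed.

Lemma Wconj_sym S T : Wconj S T -> Wconj T S.
Proof.
case=> w [[s [rs wE]] ST]; rewrite (eq_map wE) in ST.
apply: (@Wconj_reflword (rev s)); first exact: rootword_rev.
have <- : map (reflword (rev s)) (map (reflword s) S) = S.
  by rewrite -map_comp (eq_map (reflwordK (rootword_nondeg rs))) map_id.
by apply: perm_map; rewrite perm_sym.
Qed.

Lemma Wconj_trans S T U : Wconj S T -> Wconj T U -> Wconj S U.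
Proof.
case=> w1 [[s1 [rs1 w1E]] ST]; case=> w2 [[s2 [rs2 w2E]] TU].
rewrite (eq_map w1E) in ST; rewrite (eq_map w2E) in TU.
apply: (@Wconj_reflword (s2 ++ s1)); first exact: rootword_cat.
have -> : map (reflword (s2 ++ s1)) S = map (reflword s2) (map (reflword s1) S).
  by rewrite -map_comp; apply: eq_map => x; rewrite reflword_cat.
exact: perm_trans (perm_map _ ST) TU.
Qed.

End RootSystem.

(** * Conjugacy classes of orthogonal sets of roots *)

Definition iroot (n : nat) : ivec := nth [::] iroots n.
Definition rootE8 (R : realFieldType) (n : nat) : vec R := emb R (iroot n).
Definition iword (w : seq nat) (x : ivec) : ivec := foldr (fun n => irefl (iroot n)) x w.

Lemma size_iroots : size iroots = 240%N.
Proof. by vm_compute. Qed.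

Lemma iroot_mem n : (n < 240)%N -> iroot n \in iroots.
Proof. by move=> lt_n; rewrite mem_nth ?size_iroots. Qed.

Lemma iroot_index z : z \in iroots -> exists2 n, (n < 240)%N & iroot n = z.
Proof.
move=> z_root; exists (index z iroots); last exact: nth_index.
by rewrite -size_iroots index_mem.
Qed.

(* The canonical sets, each with its table: for every root [n] orthogonal to [c], an entry
   [(n, w)] such that the product of the reflections in the roots [w] maps [n :: c] onto a
   canonical set ([table_ok] below). *)
Definition cert : seq (seq nat * seq (nat * seq nat)) := [::
  ([::], [::
    (0, [::]); (1, [:: 28; 29]); (2, [:: 4; 5]); (3, [:: 0]); (4, [:: 29]); (5, [:: 28]);
    (6, [:: 0; 28]); (7, [:: 0; 29]); (8, [:: 33]); (9, [:: 32]); (10, [:: 0; 32]);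
    (11, [:: 0; 33]); (12, [:: 37]); (13, [:: 36]); (14, [:: 0; 36]); (15, [:: 0; 37]);
    (16, [:: 41]); (17, [:: 40]); (18, [:: 0; 40]); (19, [:: 0; 41]); (20, [:: 45]);
    (21, [:: 44]); (22, [:: 0; 44]); (23, [:: 0; 45]); (24, [:: 49]); (25, [:: 48]);
    (26, [:: 0; 48]); (27, [:: 0; 49]); (28, [:: 5]); (29, [:: 4]); (30, [:: 0; 4]);
    (31, [:: 0; 5]); (32, [:: 9]); (33, [:: 8]); (34, [:: 0; 8]); (35, [:: 0; 9]); (36, [:: 13]);
    (37, [:: 12]); (38, [:: 0; 12]); (39, [:: 0; 13]); (40, [:: 17]); (41, [:: 16]);
    (42, [:: 0; 16]); (43, [:: 0; 17]); (44, [:: 21]); (45, [:: 20]); (46, [:: 0; 20]);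
    (47, [:: 0; 21]); (48, [:: 25]); (49, [:: 24]); (50, [:: 0; 24]); (51, [:: 0; 25]);
    (52, [:: 5; 33]); (53, [:: 5; 32]); (54, [:: 4; 33]); (55, [:: 4; 32]); (56, [:: 5; 37]);
    (57, [:: 5; 36]); (58, [:: 4; 37]); (59, [:: 4; 36]); (60, [:: 5; 41]); (61, [:: 5; 40]);
    (62, [:: 4; 41]); (63, [:: 4; 40]); (64, [:: 5; 45]); (65, [:: 5; 44]); (66, [:: 4; 45]);
    (67, [:: 4; 44]); (68, [:: 5; 49]); (69, [:: 5; 48]); (70, [:: 4; 49]); (71, [:: 4; 48]);
    (72, [:: 9; 37]); (73, [:: 9; 36]); (74, [:: 8; 37]); (75, [:: 8; 36]); (76, [:: 9; 41]);
    (77, [:: 9; 40]); (78, [:: 8; 41]); (79, [:: 8; 40]); (80, [:: 9; 45]); (81, [:: 9; 44]);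
    (82, [:: 8; 45]); (83, [:: 8; 44]); (84, [:: 9; 49]); (85, [:: 9; 48]); (86, [:: 8; 49]);
    (87, [:: 8; 48]); (88, [:: 13; 41]); (89, [:: 13; 40]); (90, [:: 12; 41]); (91, [:: 12; 40]);
    (92, [:: 13; 45]); (93, [:: 13; 44]); (94, [:: 12; 45]); (95, [:: 12; 44]); (96, [:: 13; 49]);
    (97, [:: 13; 48]); (98, [:: 12; 49]); (99, [:: 12; 48]); (100, [:: 17; 45]);
    (101, [:: 17; 44]); (102, [:: 16; 45]); (103, [:: 16; 44]); (104, [:: 17; 49]);
    (105, [:: 17; 48]); (106, [:: 16; 49]); (107, [:: 16; 48]); (108, [:: 21; 49]);
    (109, [:: 21; 48]); (110, [:: 20; 49]); (111, [:: 20; 48]); (112, [:: 143]); (113, [:: 142]);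
    (114, [:: 141]); (115, [:: 140]); (116, [:: 139]); (117, [:: 138]); (118, [:: 137]);
    (119, [:: 136]); (120, [:: 135]); (121, [:: 134]); (122, [:: 133]); (123, [:: 132]);
    (124, [:: 131]); (125, [:: 130]); (126, [:: 129]); (127, [:: 128]); (128, [:: 127]);
    (129, [:: 126]); (130, [:: 125]); (131, [:: 124]); (132, [:: 123]); (133, [:: 122]);
    (134, [:: 121]); (135, [:: 120]); (136, [:: 119]); (137, [:: 118]); (138, [:: 117]);
    (139, [:: 116]); (140, [:: 115]); (141, [:: 114]); (142, [:: 113]); (143, [:: 112]);
    (144, [:: 29; 127]); (145, [:: 29; 126]); (146, [:: 29; 125]); (147, [:: 29; 124]);
    (148, [:: 29; 123]); (149, [:: 29; 122]); (150, [:: 29; 121]); (151, [:: 29; 120]);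
    (152, [:: 29; 119]); (153, [:: 29; 118]); (154, [:: 29; 117]); (155, [:: 29; 116]);
    (156, [:: 29; 115]); (157, [:: 29; 114]); (158, [:: 29; 113]); (159, [:: 29; 112]);
    (160, [:: 28; 143]); (161, [:: 28; 142]); (162, [:: 28; 141]); (163, [:: 28; 140]);
    (164, [:: 28; 139]); (165, [:: 28; 138]); (166, [:: 28; 137]); (167, [:: 28; 136]);
    (168, [:: 28; 135]); (169, [:: 28; 134]); (170, [:: 28; 133]); (171, [:: 28; 132]);
    (172, [:: 28; 131]); (173, [:: 28; 130]); (174, [:: 28; 129]); (175, [:: 28; 128]);
    (176, [:: 5; 127]); (177, [:: 5; 126]); (178, [:: 5; 125]); (179, [:: 5; 124]);
    (180, [:: 5; 123]); (181, [:: 5; 122]); (182, [:: 5; 121]); (183, [:: 5; 120]);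
    (184, [:: 5; 119]); (185, [:: 5; 118]); (186, [:: 5; 117]); (187, [:: 5; 116]);
    (188, [:: 5; 115]); (189, [:: 5; 114]); (190, [:: 5; 113]); (191, [:: 5; 112]);
    (192, [:: 4; 143]); (193, [:: 4; 142]); (194, [:: 4; 141]); (195, [:: 4; 140]);
    (196, [:: 4; 139]); (197, [:: 4; 138]); (198, [:: 4; 137]); (199, [:: 4; 136]);
    (200, [:: 4; 135]); (201, [:: 4; 134]); (202, [:: 4; 133]); (203, [:: 4; 132]);
    (204, [:: 4; 131]); (205, [:: 4; 130]); (206, [:: 4; 129]); (207, [:: 4; 128]);
    (208, [:: 0; 112]); (209, [:: 0; 113]); (210, [:: 0; 114]); (211, [:: 0; 115]);
    (212, [:: 0; 116]); (213, [:: 0; 117]); (214, [:: 0; 118]); (215, [:: 0; 119]);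
    (216, [:: 0; 120]); (217, [:: 0; 121]); (218, [:: 0; 122]); (219, [:: 0; 123]);
    (220, [:: 0; 124]); (221, [:: 0; 125]); (222, [:: 0; 126]); (223, [:: 0; 127]);
    (224, [:: 0; 128]); (225, [:: 0; 129]); (226, [:: 0; 130]); (227, [:: 0; 131]);
    (228, [:: 0; 132]); (229, [:: 0; 133]); (230, [:: 0; 134]); (231, [:: 0; 135]);
    (232, [:: 0; 136]); (233, [:: 0; 137]); (234, [:: 0; 138]); (235, [:: 0; 139]);
    (236, [:: 0; 140]); (237, [:: 0; 141]); (238, [:: 0; 142]); (239, [:: 0; 143])]);
  ([:: 0], [::
    (1, [::]); (2, [:: 1]); (52, [:: 168; 175]); (53, [:: 160; 167]); (54, [:: 152; 159]);
    (55, [:: 144; 151]); (56, [:: 164; 175]); (57, [:: 160; 171]); (58, [:: 148; 159]);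
    (59, [:: 144; 155]); (60, [:: 162; 175]); (61, [:: 160; 173]); (62, [:: 146; 159]);
    (63, [:: 144; 157]); (64, [:: 161; 175]); (65, [:: 160; 174]); (66, [:: 145; 159]);
    (67, [:: 144; 158]); (68, [:: 161; 174]); (69, [:: 160; 175]); (70, [:: 144; 159]);
    (71, [:: 145; 158]); (72, [:: 156; 175]); (73, [:: 152; 171]); (74, [:: 148; 167]);
    (75, [:: 144; 163]); (76, [:: 154; 175]); (77, [:: 152; 173]); (78, [:: 146; 167]);
    (79, [:: 144; 165]); (80, [:: 153; 175]); (81, [:: 152; 174]); (82, [:: 145; 167]);
    (83, [:: 144; 166]); (84, [:: 153; 174]); (85, [:: 152; 175]); (86, [:: 144; 167]);
    (87, [:: 145; 166]); (88, [:: 150; 175]); (89, [:: 148; 173]); (90, [:: 146; 171]);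
    (91, [:: 144; 169]); (92, [:: 149; 175]); (93, [:: 148; 174]); (94, [:: 145; 171]);
    (95, [:: 144; 170]); (96, [:: 149; 174]); (97, [:: 148; 175]); (98, [:: 144; 171]);
    (99, [:: 145; 170]); (100, [:: 147; 175]); (101, [:: 146; 174]); (102, [:: 145; 173]);
    (103, [:: 144; 172]); (104, [:: 147; 174]); (105, [:: 146; 175]); (106, [:: 144; 173]);
    (107, [:: 145; 172]); (108, [:: 147; 173]); (109, [:: 145; 175]); (110, [:: 144; 174]);
    (111, [:: 146; 172]); (144, [:: 175]); (145, [:: 174]); (146, [:: 173]); (147, [:: 172]);
    (148, [:: 171]); (149, [:: 170]); (150, [:: 169]); (151, [:: 168]); (152, [:: 167]);
    (153, [:: 166]); (154, [:: 165]); (155, [:: 164]); (156, [:: 163]); (157, [:: 162]);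
    (158, [:: 161]); (159, [:: 160]); (160, [:: 159]); (161, [:: 158]); (162, [:: 157]);
    (163, [:: 156]); (164, [:: 155]); (165, [:: 154]); (166, [:: 153]); (167, [:: 152]);
    (168, [:: 151]); (169, [:: 150]); (170, [:: 149]); (171, [:: 148]); (172, [:: 147]);
    (173, [:: 146]); (174, [:: 145]); (175, [:: 144]); (176, [:: 1; 144]); (177, [:: 1; 145]);
    (178, [:: 1; 146]); (179, [:: 1; 147]); (180, [:: 1; 148]); (181, [:: 1; 149]);
    (182, [:: 1; 150]); (183, [:: 1; 151]); (184, [:: 1; 152]); (185, [:: 1; 153]);
    (186, [:: 1; 154]); (187, [:: 1; 155]); (188, [:: 1; 156]); (189, [:: 1; 157]);
    (190, [:: 1; 158]); (191, [:: 1; 159]); (192, [:: 1; 160]); (193, [:: 1; 161]);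
    (194, [:: 1; 162]); (195, [:: 1; 163]); (196, [:: 1; 164]); (197, [:: 1; 165]);
    (198, [:: 1; 166]); (199, [:: 1; 167]); (200, [:: 1; 168]); (201, [:: 1; 169]);
    (202, [:: 1; 170]); (203, [:: 1; 171]); (204, [:: 1; 172]); (205, [:: 1; 173]);
    (206, [:: 1; 174]); (207, [:: 1; 175])]);
  ([:: 0; 1], [::
    (52, [::]); (53, [:: 72; 73]); (54, [:: 56; 57]); (55, [:: 52]); (56, [:: 73]); (57, [:: 72]);
    (58, [:: 52; 72]); (59, [:: 52; 73]); (60, [:: 77]); (61, [:: 76]); (62, [:: 52; 76]);
    (63, [:: 52; 77]); (64, [:: 81]); (65, [:: 80]); (66, [:: 52; 80]); (67, [:: 52; 81]);
    (68, [:: 85]); (69, [:: 84]); (70, [:: 52; 84]); (71, [:: 52; 85]); (72, [:: 57]);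
    (73, [:: 56]); (74, [:: 52; 56]); (75, [:: 52; 57]); (76, [:: 61]); (77, [:: 60]);
    (78, [:: 52; 60]); (79, [:: 52; 61]); (80, [:: 65]); (81, [:: 64]); (82, [:: 52; 64]);
    (83, [:: 52; 65]); (84, [:: 69]); (85, [:: 68]); (86, [:: 52; 68]); (87, [:: 52; 69]);
    (88, [:: 57; 77]); (89, [:: 57; 76]); (90, [:: 56; 77]); (91, [:: 56; 76]); (92, [:: 57; 81]);
    (93, [:: 57; 80]); (94, [:: 56; 81]); (95, [:: 56; 80]); (96, [:: 57; 85]); (97, [:: 57; 84]);
    (98, [:: 56; 85]); (99, [:: 56; 84]); (100, [:: 61; 81]); (101, [:: 61; 80]);
    (102, [:: 60; 81]); (103, [:: 60; 80]); (104, [:: 61; 85]); (105, [:: 61; 84]);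
    (106, [:: 60; 85]); (107, [:: 60; 84]); (108, [:: 65; 85]); (109, [:: 65; 84]);
    (110, [:: 64; 85]); (111, [:: 64; 84])]);
  ([:: 0; 1; 52], [::
    (53, [::]); (54, [:: 53]); (88, [::]); (89, [:: 100; 101]); (90, [:: 92; 93]); (91, [:: 88]);
    (92, [:: 101]); (93, [:: 100]); (94, [:: 88; 100]); (95, [:: 88; 101]); (96, [:: 105]);
    (97, [:: 104]); (98, [:: 88; 104]); (99, [:: 88; 105]); (100, [:: 93]); (101, [:: 92]);
    (102, [:: 88; 92]); (103, [:: 88; 93]); (104, [:: 97]); (105, [:: 96]); (106, [:: 88; 96]);
    (107, [:: 88; 97]); (108, [:: 93; 105]); (109, [:: 93; 104]); (110, [:: 92; 105]);
    (111, [:: 92; 104])]);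
  ([:: 0; 1; 52; 53], [::
    (88, [::]); (89, [:: 100; 101]); (90, [:: 92; 93]); (91, [:: 88]); (92, [:: 101]);
    (93, [:: 100]); (94, [:: 88; 100]); (95, [:: 88; 101]); (96, [:: 105]); (97, [:: 104]);
    (98, [:: 88; 104]); (99, [:: 88; 105]); (100, [:: 93]); (101, [:: 92]); (102, [:: 88; 92]);
    (103, [:: 88; 93]); (104, [:: 97]); (105, [:: 96]); (106, [:: 88; 96]); (107, [:: 88; 97]);
    (108, [:: 93; 105]); (109, [:: 93; 104]); (110, [:: 92; 105]); (111, [:: 92; 104])]);
  ([:: 0; 1; 52; 88], [::
    (53, [::]); (54, [:: 53]); (89, [:: 77; 57]); (90, [:: 73; 61]); (108, [:: 166; 159]);
    (109, [:: 134; 127]); (110, [:: 135; 126]); (111, [:: 167; 158])]);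
  ([:: 0; 1; 52; 53; 88], [::
    (89, [::]); (90, [:: 89]); (108, [:: 132; 131]); (109, [:: 140; 139]); (110, [:: 141; 138]);
    (111, [:: 133; 130])]);
  ([:: 0; 1; 52; 53; 88; 89], [::
    (108, [::]); (109, [:: 49; 48]); (110, [:: 45; 44]); (111, [:: 108])]);
  ([:: 0; 1; 52; 53; 88; 89; 108], [::
    (109, [::]); (110, [:: 109])]);
  ([:: 0; 1; 52; 53; 88; 89; 108; 109], [::])].

Definition canon : seq (seq nat) := unzip1 cert.

Definition orthogonal_to (c : seq nat) (n : nat) : bool :=
  all (fun i => idot (iroot i) (iroot n) == 0) c.

Definition table_ok (c : seq nat) (tab : seq (nat * seq nat)) : bool :=
  [&& all (fun i => i < 240)%N c,
      all (fun n => orthogonal_to c n ==> (n \in unzip1 tab)) (iota 0 240) &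
      all (fun e => all (fun n => n < 240)%N e.2 &&
         has (fun c' => perm_eq (map (iword e.2) (map iroot (e.1 :: c))) (map iroot c')) canon)
        tab].

Lemma cert_ok : all (fun e => table_ok e.1 e.2) cert.
Proof. by vm_compute. Qed.

Definition quadK4in : seq nat := [:: 0; 1; 52; 53].
Definition quadK4out : seq nat := [:: 0; 1; 52; 88].

Lemma canon_size_uniq :
  all (fun c => all (fun c' => (size c == size c') ==> (size c == 4%N) || (c == c')) canon) canon.
Proof. by vm_compute. Qed.

Lemma canon_size4 : [seq c <- canon | size c == 4%N] = [:: quadK4in; quadK4out].
Proof. by vm_compute. Qed.

Lemma quads_canon : quadK4in \in canon /\ quadK4out \in canon.
Proof.
have in4 c : c \in [:: quadK4in; quadK4out] -> c \in canon.
  by rewrite -canon_size4 mem_filter => /andP[].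
by split; apply: in4; rewrite !inE eqxx ?orbT.
Qed.

Definition iorthogonal (c : seq nat) : bool :=
  [&& all (fun i => i < 240)%N c, uniq (map iroot c) &
      all (fun i => all (fun j => (i == j) || (idot (iroot i) (iroot j) == 0)) c) c].

Lemma canon_orthogonal : all iorthogonal canon.
Proof. by vm_compute. Qed.

Section Classification.
Variable R : realFieldType.
Local Notation emb := (@emb R).
Local Notation rootE8 := (@rootE8 R).
Implicit Types (x : vec R) (S T : seq (vec R)) (w c : seq nat).

Lemma isE8root_rootE8 n : (n < 240)%N -> isE8root (rootE8 n).
Proof. by move=> lt_n; apply/isE8rootP; exists (iroot n); rewrite ?iroot_mem. Qed.

Lemma rootword_rootE8 w : all (fun n => n < 240)%N w -> rootword (map rootE8 w).
Proof. by move=> /allP w_lt x /mapP[n /w_lt lt_n ->]; apply: isE8root_rootE8. Qed.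

Lemma idot_eq0 (a b : ivec) : dotp (emb a) (emb b) = 0 -> idot a b = 0.
Proof. by rewrite dotp_emb => /eqP; rewrite mulf_eq0 invr_eq0 pnatr_eq0 orbF intr_eq0 => /eqP. Qed.

Lemma reflword_emb w z : all (fun n => n < 240)%N w -> z \in iroots ->
  reflword (map rootE8 w) (emb z) = emb (iword w z) /\ iword w z \in iroots.
Proof.
elim: w => //= n w IH /andP[lt_n w_lt] z_root; have [-> wz_root] := IH w_lt z_root.
exact: emb_irefl_root (iroot_mem lt_n) wz_root.
Qed.

Lemma map_reflword_rootE8 w c : all (fun n => n < 240)%N w -> all (fun n => n < 240)%N c ->
  map (reflword (map rootE8 w)) (map rootE8 c) = map emb (map (iword w) (map iroot c)).
Proof.
move=> w_lt; elim: c => //= i c IH /andP[lt_i c_lt].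
by rewrite IH // (reflword_emb w_lt (iroot_mem lt_i)).1.
Qed.

Lemma table_of c : c \in canon -> exists tab, (c, tab) \in cert.
Proof. by case/mapP=> -[c' tab] c_tab ->; exists tab. Qed.

Lemma canon_extend c n : c \in canon -> (n < 240)%N -> orthogonal_to c n ->
  exists2 w, rootword w & exists2 c', c' \in canon &
    perm_eq (map (reflword w) (rootE8 n :: map rootE8 c)) (map rootE8 c').
Proof.
move=> /table_of[tab c_tab] lt_n n_orth.
have /and3P[c_lt /allP cover /allP entries] := allP cert_ok _ c_tab.
have n_in : n \in iota 0 240 by rewrite mem_iota add0n lt_n.
have /mapP[[n' w] nw_tab /= n'E] := implyP (cover n n_in) n_orth; subst n'.
have /andP[w_lt /hasP[c' c'_canon c'_perm]] := entries _ nw_tab.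
exists (map rootE8 w); first exact: rootword_rootE8.
exists c' => //; have nc_lt : all (fun i => i < 240)%N (n :: c) by rewrite /= lt_n.
rewrite -[X in perm_eq X _]/(map (reflword (map rootE8 w)) (map rootE8 (n :: c))).
rewrite (map_reflword_rootE8 w_lt nc_lt).
by rewrite [map rootE8 c']map_comp; apply: perm_map.
Qed.

(* Conjugate the roots of [S] one at a time: the table of the canonical set reached so far
   takes care of the image of the next root. *)
Lemma classify_orthogonal S : uniq S -> rootword S ->
  {in S &, forall a b, a != b -> dotp a b = 0} ->
  exists2 c, c \in canon & exists2 s, rootword s & perm_eq (map (reflword s) S) (map rootE8 c).
Proof.
elim: S => [|r S IH] /=.
  by move=> *; exists [::]; [vm_compute | exists [::]].
case/andP=> r_notin uS rS oS.
have [|b a bS aS|c c_canon [s1 rs1 S_c]] := IH uS.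
- by move=> a aS; apply: rS; rewrite inE aS orbT.
- by apply: oS; rewrite inE ?bS ?aS orbT.
have [n lt_n rE] : exists2 n, (n < 240)%N & reflword s1 r = rootE8 n.
  have /isE8rootP[z z_root ->] := reflword_root rs1 (rS r (mem_head r S)).
  by have [n lt_n <-] := iroot_index z_root; exists n.
have n_orth : orthogonal_to c n.
  apply/allP => i i_c; apply/eqP/idot_eq0; change (dotp (rootE8 i) (rootE8 n) = 0).
  have /mapP[b bS ->] : rootE8 i \in map (reflword s1) S by rewrite (perm_mem S_c) map_f.
  rewrite -rE (reflword_iso (rootword_nondeg rs1)).
  apply: (oS b r); rewrite ?inE ?eqxx ?bS ?orbT //.
  by apply: contraNneq r_notin => <-.
have [w rw [c' c'_canon c'_perm]] := canon_extend c_canon lt_n n_orth.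
exists c' => //; exists (w ++ s1); first exact: rootword_cat.
rewrite reflword_cat rE.
have -> : map (reflword (w ++ s1)) S = map (reflword w) (map (reflword s1) S).
  by rewrite -map_comp; apply: eq_map => x; rewrite /= reflword_cat.
rewrite -[X in perm_eq X _]/(map (reflword w) (rootE8 n :: map (reflword s1) S)).
by apply: perm_trans c'_perm; apply: perm_map; rewrite perm_cons.
Qed.

Lemma SOset_classify k S : SOset k S ->
  exists2 c, c \in canon & size c = k /\ Wconj S (map rootE8 c).
Proof.
case=> uS [<- [rS oS]].
have [a b aS bS neq_ab|c c_canon [s rs S_c]] := classify_orthogonal uS rS.
  by have [_ []] := oS a b aS bS neq_ab.
exists c => //; split; last exact: Wconj_reflword rs S_c.
by have := perm_size S_c; rewrite !size_map.
Qed.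

Lemma canon_eq c c' :
  c \in canon -> c' \in canon -> size c = size c' -> size c != 4%N -> c = c'.
Proof.
move=> c_canon c'_canon eq_size neq4.
have := implyP (allP (allP canon_size_uniq c c_canon) c' c'_canon) (introT eqP eq_size).
by rewrite (negbTE neq4) => /eqP.
Qed.

Lemma canon4 c : c \in canon -> size c = 4%N -> c = quadK4in \/ c = quadK4out.
Proof.
move=> c_canon size_c.
have : c \in [seq c <- canon | size c == 4%N] by rewrite mem_filter size_c eqxx.
by rewrite canon_size4 !inE => /orP[] /eqP ->; [left | right].
Qed.

Lemma SOset_canon c : c \in canon -> SOset (size c) (map rootE8 c).
Proof.
move=> /(allP canon_orthogonal) /and3P[/allP c_lt u_c /allP o_c].
have root_c x : x \in map rootE8 c -> exists2 i, i \in c & x = rootE8 i by case/mapP=> i; exists i.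
split.
  rewrite [map rootE8 c]map_comp map_inj_in_uniq // => z y /mapP[i /c_lt lt_i ->].
  by case/mapP=> j /c_lt lt_j ->; apply: emb_inj; apply/iroots_size/iroot_mem.
split; first by rewrite size_map.
split; first by move=> x /root_c[i /c_lt lt_i ->]; apply: isE8root_rootE8.
move=> x y /root_c[i ic ->] /root_c[j jc ->] neq_ij.
apply: orth_roots_strongly_orth => //; try exact/isE8root_rootE8/c_lt.
have neq_ij' : i != j by apply: contraNneq neq_ij => ->.
have := allP (o_c i ic) j jc; rewrite (negbTE neq_ij') /= => /eqP dij.
by rewrite /rootE8 dotp_emb dij mul0r.
Qed.

End Classification.

(** * The Klein four-group *)

Section KleinFour.
Variable R : realFieldType.
Implicit Types (a b c d x : vec R) (s S T : seq (vec R)).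

(* A wrapper rather than a definition, so that unification never unfolds the reflections. *)
Variant K4pair a b c d : Prop := K4Pair of inWeyl (refl (a - b) \o refl (c - d)).

(* [K4_in_W_seq] depends on the order in which the four roots are listed; this variant does not,
   which makes it manifestly invariant under conjugation. *)
Definition K4_in_W_set S : Prop := forall a b c d,
  a \in S -> b \in S -> c \in S -> d \in S -> uniq [:: a; b; c; d] -> K4pair a b c d.

Lemma K4pairNl a b c d : K4pair a b c d -> K4pair b a c d.
Proof. by case=> K; constructor; apply: inWeyl_ext K => x /=; rewrite -[b - a]opprB reflN. Qed.

Lemma K4pairNr a b c d : K4pair a b c d -> K4pair a b d c.
Proof. by case=> K; constructor; apply: inWeyl_ext K => x /=; rewrite -[d - c]opprB reflN. Qed.

Lemma K4pairC a b c d : dotp (a - b) (c - d) = 0 -> K4pair a b c d -> K4pair c d a b.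
Proof. by move=> orth [K]; constructor; apply: inWeyl_ext K => x /=; rewrite refl_comm. Qed.

Lemma K4pair_perm a b c d : dotp a c = 0 -> dotp a d = 0 -> dotp b c = 0 -> dotp b d = 0 ->
  K4pair a b c d ->
  [/\ K4pair b a c d, K4pair a b d c & K4pair b a d c] /\
  [/\ K4pair c d a b, K4pair d c a b, K4pair c d b a & K4pair d c b a].
Proof.
move=> ac ad bc bd K; have orth : dotp (a - b) (c - d) = 0.
  by rewrite !(dotpBl, dotpBr) ac ad bc bd !subrr.
have L := K4pairC orth K.
by split; split; first [exact: K4pairNl K | exact: K4pairNr K | exact: K4pairNl (K4pairNr K)
  | exact: L | exact: K4pairNl L | exact: K4pairNr L | exact: K4pairNl (K4pairNr L)].
Qed.

Lemma K4_in_W_seq_setE S : SOset 4 S -> (K4_in_W_seq S <-> K4_in_W_set S).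
Proof.
case=> uS [sizeS [_ oS]].
case: S uS sizeS oS => [|a [|b [|c [|d []]]]] // uS _ oS.
have o x y : x \in [:: a; b; c; d] -> y \in [:: a; b; c; d] -> x != y -> dotp x y = 0.
  by move=> xS yS neq_xy; have [_ []] := oS x y xS yS neq_xy.
move: (uS); rewrite /= !inE !negb_or => /and4P[/and3P[ab ac ad] /andP[bc bd] cd _].
have aS : a \in [:: a; b; c; d] by rewrite !inE eqxx.
have bS : b \in [:: a; b; c; d] by rewrite !inE eqxx orbT.
have cS : c \in [:: a; b; c; d] by rewrite !inE eqxx !orbT.
have dS : d \in [:: a; b; c; d] by rewrite !inE eqxx !orbT.
have oac := o _ _ aS cS ac; have oad := o _ _ aS dS ad; have obc := o _ _ bS cS bc.
have obd := o _ _ bS dS bd; have oab := o _ _ aS bS ab; have ocd := o _ _ cS dS cd.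
have [oba oca oda] : [/\ dotp b a = 0, dotp c a = 0 & dotp d a = 0] by split; rewrite dotpC.
have [ocb odb odc] : [/\ dotp c b = 0, dotp d b = 0 & dotp d c = 0] by split; rewrite dotpC.
split=> [[/K4Pair K1 [/K4Pair K2 /K4Pair K3]] | K].
  have [[? ? ?] [? ? ? ?]] := K4pair_perm oac oad obc obd K1.
  have [[? ? ?] [? ? ? ?]] := K4pair_perm oab oad ocb ocd K2.
  have [[? ? ?] [? ? ? ?]] := K4pair_perm oab oac odb odc K3.
  (* each of the 4^4 choices is either not duplicate-free or one of the 24 orderings above *)
  move=> x y z t; rewrite !inE.
  by do 4!case/or4P=> /eqP->; rewrite /= ?inE ?eqxx ?orbT ?andbF //.
have u2 : uniq [:: a; c; b; d].
  by rewrite /= !inE ?(eq_sym c b) ?(eq_sym d b) !negb_or ab ac ad bc bd cd.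
have u3 : uniq [:: a; d; b; c].
  by rewrite /= !inE ?(eq_sym d b) ?(eq_sym d c) !negb_or ab ac ad bc bd cd.
have [K1] := K _ _ _ _ aS bS cS dS uS; have [K2] := K _ _ _ _ aS cS bS dS u2.
have [K3] := K _ _ _ _ aS dS bS cS u3.
by split; [|split].
Qed.

Lemma K4pair_conj s a b c d : rootword s -> K4pair a b c d ->
  K4pair (reflword s a) (reflword s b) (reflword s c) (reflword s d).
Proof.
move=> rs [[s0 [rs0 gE]]]; have nd := rootword_nondeg rs.
constructor; exists (s ++ s0 ++ rev s); split.
  by do !apply: rootword_cat => //; apply: rootword_rev.
move=> x; rewrite !reflword_cat -gE -{1}(reflword_revK nd x) -!reflwordB.
by rewrite /= -!(reflword_conj nd).
Qed.

Lemma K4_in_W_set_conj S T : Wconj S T -> K4_in_W_set S -> K4_in_W_set T.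
Proof.
case=> w [[s [rs wE]] ST] K a b c d; rewrite (eq_map wE) in ST.
have preimage x : x \in T -> exists2 x', x' \in S & x = reflword s x'.
  by rewrite -(perm_mem ST) => /mapP.
move=> /preimage[a' aS ->] /preimage[b' bS ->] /preimage[c' cS ->] /preimage[d' dS ->] u.
apply: K4pair_conj => //; apply: K => //.
by move: u; rewrite -[[:: _; _; _; _]]/(map (reflword s) [:: a'; b'; c'; d'])
  (map_inj_uniq (reflword_inj rs)).
Qed.

Lemma K4_in_W_seq_conj S T : SOset 4 S -> SOset 4 T -> Wconj S T ->
  K4_in_W_seq S -> K4_in_W_seq T.
Proof.
move=> SO_S SO_T ST /(K4_in_W_seq_setE SO_S) KS.
exact/(K4_in_W_seq_setE SO_T)/(K4_in_W_set_conj ST).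
Qed.

Lemma K4pair_halves a b c d : let u := a - b in let v := c - d in
  dotp u v = 0 -> dotp u u = dotp v v -> dotp u u != 0 ->
  isE8root ((1/2) *: (u + v)) -> isE8root ((1/2) *: (u - v)) -> K4pair a b c d.
Proof.
move=> u v uv uu u0 r1 r2; constructor; exists [:: (1/2) *: (u + v); (1/2) *: (u - v)].
split; first by move=> x; rewrite !inE => /orP[] /eqP ->.
by move=> x; rewrite /= refl_pair.
Qed.

Lemma K4pair_moves_root a b c d r : isE8root r ->
  ~ isE8root (refl (a - b) (refl (c - d) r)) -> ~ K4pair a b c d.
Proof.
move=> rr not_root [[s [rs gE]]]; apply: not_root.
by have /= -> := gE r; apply: reflword_root.
Qed.

End KleinFour.

Definition ihalf_roots (a b c d : ivec) : bool :=
  let u := isub a b in let v := isub c d in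
  [&& idot u v == 0, idot u u == idot v v, idot u u != 0,
      has (fun r => iadd u v == idouble r) iroots & has (fun r => isub u v == idouble r) iroots].

Definition imoves_out (a b c d : ivec) : bool :=
  let u := isub a b in let v := isub c d in
  has (fun r => [&& irefl_exact v r, irefl_exact u (irefl v r) & irefl u (irefl v r) \notin iroots])
    iroots.

Lemma quadK4in_halves :
  [&& ihalf_roots (iroot 0) (iroot 1) (iroot 52) (iroot 53),
      ihalf_roots (iroot 0) (iroot 52) (iroot 1) (iroot 53) &
      ihalf_roots (iroot 0) (iroot 53) (iroot 1) (iroot 52)].
Proof. by vm_compute. Qed.

Lemma quadK4out_moves_out : imoves_out (iroot 0) (iroot 1) (iroot 52) (iroot 88).
Proof. by vm_compute. Qed.

Section Quads.
Variable R : realFieldType.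
Local Notation emb := (@emb R).
Local Notation rootE8 := (@rootE8 R).

Lemma K4pair_ihalf_roots (a b c d : ivec) :
  ihalf_roots a b c d -> K4pair (emb a) (emb b) (emb c) (emb d).
Proof.
case/and5P=> /eqP uv /eqP uu u0 /hasP[r1 r1_root /eqP e1] /hasP[r2 r2_root /eqP e2].
have half_double (r : ivec) : (1/2) *: emb (idouble r) = emb r.
  by rewrite emb_double scalerA mul1r mulVf ?pnatr_eq0 // scale1r.
apply: K4pair_halves; rewrite -!embB ?dotp_emb ?uv ?uu ?mul0r //.
- by rewrite -uu mulf_neq0 ?intr_eq0 ?invr_eq0 ?pnatr_eq0.
- by apply/isE8rootP; exists r1; [exact: r1_root | rewrite -embD e1 half_double].
- by apply/isE8rootP; exists r2; [exact: r2_root | rewrite e2 half_double].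
Qed.

Lemma not_K4pair_imoves_out (a b c d : ivec) :
  imoves_out a b c d -> ~ K4pair (emb a) (emb b) (emb c) (emb d).
Proof.
case/hasP=> r r_root /and3P[exact_v exact_u not_root].
apply: (@K4pair_moves_root _ _ _ _ _ (emb r)); first by apply/isE8rootP; exists r.
rewrite -!embB !emb_irefl // => /isE8rootP[z z_root ez].
by move: not_root; rewrite (emb_inj (size_irefl _ _) (iroots_size z_root) ez) z_root.
Qed.

Lemma quadK4in_K4_in_W : K4_in_W_seq (map rootE8 quadK4in).
Proof.
have /and3P[/K4pair_ihalf_roots[K1] /K4pair_ihalf_roots[K2] /K4pair_ihalf_roots[K3]] :=
  quadK4in_halves.
by split; [|split].
Qed.

Lemma quadK4out_not_K4_in_W : ~ K4_in_W_seq (map rootE8 quadK4out).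
Proof. by case=> K _; apply: (not_K4pair_imoves_out quadK4out_moves_out); constructor. Qed.

End Quads.

Theorem mainTheorem5 (R : realFieldType) :
  (forall (k : nat), (k <= 8)%N -> k != 4%N ->
     forall S T : seq (vec R), SOset k S -> SOset k T -> Wconj S T)
  /\
  ((forall S T : seq (vec R), SOset 4 S -> SOset 4 T ->
      (K4_in_W_seq S <-> K4_in_W_seq T) -> Wconj S T)
   /\ (forall S T : seq (vec R), SOset 4 S -> SOset 4 T ->
      Wconj S T -> (K4_in_W_seq S <-> K4_in_W_seq T))
   /\ (exists S : seq (vec R), SOset 4 S /\ K4_in_W_seq S)
   /\ (exists S : seq (vec R), SOset 4 S /\ ~ K4_in_W_seq S)).
Proof.
pose roots_of := map (rootE8 R).
have [SO_in SO_out] : SOset 4 (roots_of quadK4in) /\ SOset 4 (roots_of quadK4out).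
  by have [/SOset_canon ? /SOset_canon ?] := quads_canon.
have K4_invariant (S T : seq (vec R)) :
    SOset 4 S -> SOset 4 T -> Wconj S T -> K4_in_W_seq S <-> K4_in_W_seq T.
  by move=> SO_S SO_T ST; split; apply: K4_in_W_seq_conj => //; apply: Wconj_sym.
have classify4 (S : seq (vec R)) : SOset 4 S ->
    Wconj S (roots_of quadK4in) /\ K4_in_W_seq S \/ Wconj S (roots_of quadK4out) /\ ~ K4_in_W_seq S.
  move=> SO_S; have [c /canon4 c4 [/c4[]-> S_c]] := SOset_classify SO_S.
    by left; split; last exact/(K4_invariant _ _ SO_S SO_in S_c)/quadK4in_K4_in_W.
  by right; split; last move/(K4_invariant _ _ SO_S SO_out S_c)/quadK4out_not_K4_in_W.
split.
  move=> k _ k_neq4 S T /SOset_classify[c c_canon [size_c S_c]].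
  case/SOset_classify=> c' c'_canon [size_c' T_c'].
  rewrite (canon_eq c_canon c'_canon) ?size_c ?size_c' // in S_c.
  exact: Wconj_trans S_c (Wconj_sym T_c').
split.
  move=> S T /classify4[] [S_c KS] /classify4[] [T_c KT] ST;
    try exact: Wconj_trans S_c (Wconj_sym T_c); by exfalso; tauto.
split; first exact: K4_invariant.
split; first by exists (roots_of quadK4in); split; last exact: quadK4in_K4_in_W.
by exists (roots_of quadK4out); split; last exact: quadK4out_not_K4_in_W.
Qed.
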